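(* Let $(\mathcal M^-,\mathcal M^+)$ and $(\mathcal N^-,\mathcal N^+)$ be symbolic matrix bisystems satisfying FPCC. If they are properly strong shift equivalent in 1-step, then they are strong shift equivalent in 1-step.
   Context: Formal sums/specifications: $\mathfrak S_\Sigma$ = finite formal sums over a finite alphabet; products of matrices over $C$ and $D$ are over $C\cdot D=\{cd\}$; a specification is a bijection from a subset of one alphabet (possibly of two-letter words) onto a subset of another; $\mathcal A\overset{\phi}{\simeq}\mathcal A'$ means $\mathcal A'$ is obtained by replacing each symbol (resp. two-letter word) $a$ of $\mathcal A$ by $\phi(a)$; $\kappa(ab)=ba$. Symbolic matrix bisystem over $\Sigma^\pm$: $(\mathcal M^-_{l,l+1},\mathcal M^+_{l,l+1})_{l\ge0}$, $m(l)\times m(l+1)$ matrices over $\mathfrak S_{\Sigma^-},\mathfrak S_{\Sigma^+}$, no zero rows/columns, no symbol repeated within an entry or a column, $\mathcal M^-_{l,l+1}\mathcal M^+_{l+1,l+2}\overset{\kappa}{\simeq}\mathcal M^+_{l,l+1}\mathcal M^-_{l+1,l+2}$. FPCC: $m(0)=1$, $\Sigma^-=\Sigma^+$, and for each $l\ge1,j$ the words in $[\mathcal M^-_{0,1}\cdots\mathcal M^-_{l-1,l}](1,j)$ are the reversals of those in $[\mathcal M^+_{0,1}\cdots\mathcal M^+_{l-1,l}](1,j)$. Properly strong shift equivalent in 1-step ($\mathcal M$ over $\Sigma_\mathcal M$, $\mathcal N$ over $\Sigma_\mathcal N$, sizes $m(l),n(l)$): alphabets $C,D$, specifications $\varphi:\Sigma_\mathcal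 M\to C\cdot D$, $\phi:\Sigma_\mathcal N\to D\cdot C$, matrices $\mathcal P_l$ ($c(l)\times d(l+1)$ over $C$), $\mathcal Q_l$ ($d(l)\times c(l+1)$ over $D$), $\mathcal X_l$ over $D$ ($d(l)\times d(l+1)$, $l$ odd; $c(l)\times c(l+1)$, $l$ even), $\mathcal Y_l$ over $C$ ($c(l)\times c(l+1)$, $l$ odd; $d(l)\times d(l+1)$, $l$ even) with $\mathcal M^+_{l,l+1}\overset{\varphi}{\simeq}\mathcal P_{2l}\mathcal Q_{2l+1}$, $\mathcal N^+_{l,l+1}\overset{\phi}{\simeq}\mathcal Q_{2l}\mathcal P_{2l+1}$, $\mathcal M^-_{l,l+1}\overset{\kappa\varphi}{\simeq}\mathcal X_{2l}\mathcal Y_{2l+1}$, $\mathcal N^-_{l,l+1}\overset{\kappa\phi}{\simeq}\mathcal Y_{2l}\mathcal X_{2l+1}$, $\mathcal Y_{2l+1}\mathcal P_{2l+2}\overset{\kappa}{\simeq}\mathcal P_{2l+1}\mathcal Y_{2l+2}$, $\mathcal X_{2l+1}\mathcal Q_{2l+2}\overset{\kappa}{\simeq}\mathcal Q_{2l+1}\mathcal X_{2l+2}$, $\mathcal X_{2l}\mathcal P_{2l+1}\overset{\kappa}{\simeq}\mathcal P_{2l}\mathcal X_{2l+1}$, $\mathcal Y_{2l}\mathcal Q_{2l+1}\overset{\kappa}{\simeq}\mathcal Q_{2l}\mathcal Y_{2l+1}$ for all $l\ge0$. Strong shift equivalent in 1-step (for symbolic matrix bisystems $\mathcal M$ over $\Sigma^\pm_\mathcal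 M$, $\mathcal N$ over $\Sigma^\pm_\mathcal N$): there exist alphabets $C,D$, specifications $\varphi_1:\Sigma^-_\mathcal M\cdot\Sigma^+_\mathcal M\to C\cdot D$, $\varphi_2:\Sigma^-_\mathcal N\cdot\Sigma^+_\mathcal N\to D\cdot C$, $\phi^\pm_C:\Sigma^\pm_\mathcal M\cdot C\to C\cdot\Sigma^\pm_\mathcal N$, $\phi^\pm_D:\Sigma^\pm_\mathcal N\cdot D\to D\cdot\Sigma^\pm_\mathcal M$, and for each $l$ an $m(l)\times n(l+1)$ matrix $\mathcal H_l$ over $C$ and an $n(l)\times m(l+1)$ matrix $\mathcal K_l$ over $D$ with $\mathcal M^-_{l,l+1}\mathcal M^+_{l+1,l+2}\overset{\varphi_1}{\simeq}\mathcal H_l\mathcal K_{l+1}$, $\mathcal N^-_{l,l+1}\mathcal N^+_{l+1,l+2}\overset{\varphi_2}{\simeq}\mathcal K_l\mathcal H_{l+1}$, $\mathcal M^+_{l,l+1}\mathcal H_{l+1}\overset{\phi^+_C}{\simeq}\mathcal H_l\mathcal N^+_{l+1,l+2}$, $\mathcal N^+_{l,l+1}\mathcal K_{l+1}\overset{\phi^+_D}{\simeq}\mathcal K_l\mathcal M^+_{l+1,l+2}$, $\mathcal M^-_{l,l+1}\mathcal H_{l+1}\overset{\phi^-_C}{\simeq}\mathcal H_l\mathcal N^-_{l+1,l+2}$, $\mathcal N^-_{l,l+1}\mathcal K_{l+1}\overset{\phi^-_D}{\simeq}\mathcal K_l\mathcal M^-_{l+1,l+2}$. *)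

From HB Require Import structures.
From mathcomp Require Import all_boot.
Set Implicit Arguments. Unset Strict Implicit. Unset Printing Implicit Defensive.

(* A finite formal sum over a finite alphabet A (element of S_A):
   a coefficient (multiplicity) for each symbol. *)
Definition fsum (A : finType) := A -> nat.

(* A matrix over S_A, indexed by natural numbers; its dimensions are carried
   separately and only entries (i,j) with i < rows, j < cols are meaningful. *)
Definition mat (A : finType) := nat -> nat -> fsum A.

Definition mmul (A B : finType) (n : nat) (X : mat A) (Y : mat B) : mat (A * B)%type :=
  fun i k p => \sum_(j < n) X i j p.1 * Y j k p.2.

(* A specification: a bijection from a subset of A onto a subset of B,
   modelled as a partial injective map. *)
Definition is_spec (A B : finType) (f : A -> option B) : Prop :=
  forall a a' b, f a = Some b -> f a' = Some b -> a = a'.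

(* X (r x s over A)  ~~f~~  Y (r' x s' over B): Y has the same shape as X
   and is obtained from X by replacing each symbol a by f a (all symbols
   occurring in X lie in the domain of f). *)
Definition sim (A B : finType) (f : A -> option B)
  (r s : nat) (X : mat A) (r' s' : nat) (Y : mat B) : Prop :=
  r = r' /\ s = s' /\
  forall i j, i < r -> j < s ->
    (forall a, 0 < X i j a -> f a <> None) /\
    (forall b, Y i j b = \sum_(a | f a == Some b) X i j a).

Definition kappa (A B : finType) (p : (A * B)%type) : option (B * A)%type :=
  Some (p.2, p.1).

Definition kcomp (S A B : finType) (f : S -> option (A * B)%type) : S -> option (B * A)%type :=
  fun a => match f a with Some p => Some (p.2, p.1) | None => None end.

(* Symbolic matrix bisystem (M^-_{l,l+1}, M^+_{l,l+1})_l over Sigma^-, Sigma^+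
   with sizes m(l). *)
Definition symbolic (A : finType) (m : nat -> nat) (M : nat -> mat A) : Prop :=
  forall l,
    (forall i, i < m l -> exists j, j < m l.+1 /\ exists a, 0 < M l i j a) /\
    (forall j, j < m l.+1 -> exists i, i < m l /\ exists a, 0 < M l i j a) /\
    (* no symbol repeated within an entry or within a column *)
    (forall j a, j < m l.+1 -> \sum_(i < m l) M l i j a <= 1).

Definition is_bisystem (Sm Sp : finType) (m : nat -> nat)
  (Mm : nat -> mat Sm) (Mp : nat -> mat Sp) : Prop :=
  symbolic m Mm /\ symbolic m Mp /\
  forall l,
    sim (@kappa Sm Sp) (m l) (m l.+2) (mmul (m l.+1) (Mm l) (Mp l.+1))
                       (m l) (m l.+2) (mmul (m l.+1) (Mp l) (Mm l.+1)).

(* Formal sum of words in [M_{0,1} ... M_{l-1,l}](i,j). *)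
Fixpoint wprod (S : finType) (m : nat -> nat) (M : nat -> mat S)
  (l : nat) (i j : nat) (w : seq S) : nat :=
  match l with
  | 0 => ((w == [::]) && (i == j) : nat)
  | l'.+1 =>
      match rev w with
      | [::] => 0
      | a :: rw => \sum_(k < m l') wprod m M l' i k (rev rw) * M l' k j a
      end
  end.

(* FPCC (for a bisystem with Sigma^- = Sigma^+ = S); row index "1" is 0. *)
Definition FPCC (S : finType) (m : nat -> nat) (Mm Mp : nat -> mat S) : Prop :=
  m 0 = 1 /\
  forall l j (w : seq S), 1 <= l -> j < m l ->
    (0 < wprod m Mm l 0 j w) = (0 < wprod m Mp l 0 j (rev w)).

Definition pSSE1 (SM SN : finType)
  (m : nat -> nat) (Mm Mp : nat -> mat SM)
  (n : nat -> nat) (Nm Np : nat -> mat SN) : Prop :=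
  exists (C D : finType) (phi : SM -> option (C * D)%type)
         (psi : SN -> option (D * C)%type) (c d : nat -> nat)
         (P : nat -> mat C) (Q : nat -> mat D)
         (X : nat -> mat D) (Y : nat -> mat C),
    is_spec phi /\ is_spec psi /\
    forall l,
      sim phi (m l) (m l.+1) (Mp l)
          (c l.*2) (c l.*2.+2) (mmul (d l.*2.+1) (P l.*2) (Q l.*2.+1)) /\
      sim psi (n l) (n l.+1) (Np l)
          (d l.*2) (d l.*2.+2) (mmul (c l.*2.+1) (Q l.*2) (P l.*2.+1)) /\
      sim (kcomp phi) (m l) (m l.+1) (Mm l)
          (c l.*2) (c l.*2.+2) (mmul (c l.*2.+1) (X l.*2) (Y l.*2.+1)) /\
      sim (kcomp psi) (n l) (n l.+1) (Nm l)
          (d l.*2) (d l.*2.+2) (mmul (d l.*2.+1) (Y l.*2) (X l.*2.+1)) /\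
      sim (@kappa C C)
          (c l.*2.+1) (d l.*2.+3) (mmul (c l.*2.+2) (Y l.*2.+1) (P l.*2.+2))
          (c l.*2.+1) (d l.*2.+3) (mmul (d l.*2.+2) (P l.*2.+1) (Y l.*2.+2)) /\
      sim (@kappa D D)
          (d l.*2.+1) (c l.*2.+3) (mmul (d l.*2.+2) (X l.*2.+1) (Q l.*2.+2))
          (d l.*2.+1) (c l.*2.+3) (mmul (c l.*2.+2) (Q l.*2.+1) (X l.*2.+2)) /\
      sim (@kappa D C)
          (c l.*2) (d l.*2.+2) (mmul (c l.*2.+1) (X l.*2) (P l.*2.+1))
          (c l.*2) (d l.*2.+2) (mmul (d l.*2.+1) (P l.*2) (X l.*2.+1)) /\
      sim (@kappa C D)
          (d l.*2) (c l.*2.+2) (mmul (d l.*2.+1) (Y l.*2) (Q l.*2.+1))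
          (d l.*2) (c l.*2.+2) (mmul (c l.*2.+1) (Q l.*2) (Y l.*2.+1)).

Definition SSE1 (SMm SMp SNm SNp : finType)
  (m : nat -> nat) (Mm : nat -> mat SMm) (Mp : nat -> mat SMp)
  (n : nat -> nat) (Nm : nat -> mat SNm) (Np : nat -> mat SNp) : Prop :=
  exists (C D : finType)
         (phi1 : (SMm * SMp)%type -> option (C * D)%type)
         (phi2 : (SNm * SNp)%type -> option (D * C)%type)
         (phCp : (SMp * C)%type -> option (C * SNp)%type)
         (phCm : (SMm * C)%type -> option (C * SNm)%type)
         (phDp : (SNp * D)%type -> option (D * SMp)%type)
         (phDm : (SNm * D)%type -> option (D * SMm)%type)
         (H : nat -> mat C) (K : nat -> mat D),
    is_spec phi1 /\ is_spec phi2 /\ is_spec phCp /\ is_spec phCm /\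
    is_spec phDp /\ is_spec phDm /\
    forall l,
      sim phi1 (m l) (m l.+2) (mmul (m l.+1) (Mm l) (Mp l.+1))
               (m l) (m l.+2) (mmul (n l.+1) (H l) (K l.+1)) /\
      sim phi2 (n l) (n l.+2) (mmul (n l.+1) (Nm l) (Np l.+1))
               (n l) (n l.+2) (mmul (m l.+1) (K l) (H l.+1)) /\
      sim phCp (m l) (n l.+2) (mmul (m l.+1) (Mp l) (H l.+1))
               (m l) (n l.+2) (mmul (n l.+1) (H l) (Np l.+1)) /\
      sim phDp (n l) (m l.+2) (mmul (n l.+1) (Np l) (K l.+1))
               (n l) (m l.+2) (mmul (m l.+1) (K l) (Mp l.+1)) /\
      sim phCm (m l) (n l.+2) (mmul (m l.+1) (Mm l) (H l.+1))
               (m l) (n l.+2) (mmul (n l.+1) (H l) (Nm l.+1)) /\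
      sim phDm (n l) (m l.+2) (mmul (n l.+1) (Nm l) (K l.+1))
               (n l) (m l.+2) (mmul (m l.+1) (K l) (Mm l.+1)).

From mathcomp Require Import all_boot.
Set Implicit Arguments. Unset Strict Implicit. Unset Printing Implicit Defensive.

(* Given the data (C, D, phi, psi, P, Q, X, Y) of a proper 1-step equivalence
   we take the connecting matrices  H_l := X_{2l} P_{2l+1}  over D.C  and
   K_l := Y_{2l} Q_{2l+1}  over C.D.  Each of the six required relations then
   compares two four-fold products of the matrices P, Q, X, Y: for instance
   M^-_l M^+_{l+1} ~ (X Y)(P Q) and H_l K_{l+1} = (X P)(Y Q), and the two
   products agree, up to the order of the letters in each word, because
   Y P ~kappa P Y. *)

Lemma mmul4E (A B C D : finType) n1 n2 n3 (MA : mat A) (MB : mat B)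
  (MC : mat C) (MD : mat D) i j a b c d :
  mmul n2 (mmul n1 MA MB) (mmul n3 MC MD) i j ((a, b), (c, d)) =
  \sum_(s < n1) \sum_(t < n3) MA i s a * mmul n2 MB MC s t (b, c) * MD t j d.
Proof.
rewrite /mmul /=.
transitivity (\sum_(k < n2) \sum_(s < n1) \sum_(t < n3)
   MA i s a * (MB s k b * MC k t c) * MD t j d).
  apply: eq_bigr => k _; rewrite big_distrl /=; apply: eq_bigr => s _.
  rewrite big_distrr /=; apply: eq_bigr => t _; by rewrite !mulnA.
rewrite exchange_big /=; apply: eq_bigr => s _.
rewrite exchange_big /=; apply: eq_bigr => t _.
by rewrite big_distrr big_distrl.
Qed.

Lemma mmul4_swap_mid (A B C D : finType) n1 n2 n2' n3 (MA : mat A)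
  (MB : mat B) (MC : mat C) (MD : mat D) (MB' : mat C) (MC' : mat B) i j a b c d :
  (forall s t, s < n1 -> t < n3 ->
     mmul n2 MB MC s t (b, c) = mmul n2' MB' MC' s t (c, b)) ->
  mmul n2 (mmul n1 MA MB) (mmul n3 MC MD) i j ((a, b), (c, d)) =
  mmul n2' (mmul n1 MA MB') (mmul n3 MC' MD) i j ((a, c), (b, d)).
Proof.
move=> eqBC; rewrite !mmul4E; apply: eq_bigr => s _; apply: eq_bigr => t _.
by rewrite eqBC.
Qed.

Lemma mmul4_swap_left (A B C D : finType) n1 n1' n2 n3 (MA : mat A)
  (MB : mat B) (MC : mat C) (MD : mat D) (MA' : mat B) (MB' : mat A) i j a b c d :
  (forall k, k < n2 -> mmul n1 MA MB i k (a, b) = mmul n1' MA' MB' i k (b, a)) ->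
  mmul n2 (mmul n1 MA MB) (mmul n3 MC MD) i j ((a, b), (c, d)) =
  mmul n2 (mmul n1' MA' MB') (mmul n3 MC MD) i j ((b, a), (c, d)).
Proof. by move=> eqAB; apply: eq_bigr => k _; rewrite /= eqAB. Qed.

Lemma mmul4_swap_right (A B C D : finType) n1 n2 n3 n3' (MA : mat A)
  (MB : mat B) (MC : mat C) (MD : mat D) (MC' : mat D) (MD' : mat C) i j a b c d :
  (forall k, k < n2 -> mmul n3 MC MD k j (c, d) = mmul n3' MC' MD' k j (d, c)) ->
  mmul n2 (mmul n1 MA MB) (mmul n3 MC MD) i j ((a, b), (c, d)) =
  mmul n2 (mmul n1 MA MB) (mmul n3' MC' MD') i j ((a, b), (d, c)).
Proof. by move=> eqCD; apply: eq_bigr => k _; rewrite /= eqCD. Qed.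

Lemma sim_entry (A B : finType) (f : A -> option B) r s X r' s' Y i j b :
  sim f r s X r' s' Y -> i < r -> j < s ->
  Y i j b = \sum_(a | f a == Some b) X i j a.
Proof. by case=> _ [_ simXY] ltir ltjs; case: (simXY i j ltir ltjs) => _ ->. Qed.

Lemma sim_out_dom (A B : finType) (f : A -> option B) r s X r' s' Y i j a :
  sim f r s X r' s' Y -> i < r -> j < s -> f a = None -> X i j a = 0.
Proof.
case=> _ [_ simXY] ltir ltjs fa; case: (posnP (X i j a)) => // Xa_gt0.
by case: (simXY i j ltir ltjs) => /(_ a Xa_gt0).
Qed.

Lemma kappa_entry (A B : finType) r s r' s' n n' (X : mat A) (Y : mat B)
  (Y' : mat B) (X' : mat A) :
  sim (@kappa A B) r s (mmul n X Y) r' s' (mmul n' Y' X') ->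
  forall a b i j, i < r -> j < s -> mmul n' Y' X' i j (b, a) = mmul n X Y i j (a, b).
Proof.
move=> simXY a b i j ltir ltjs; rewrite (sim_entry _ simXY ltir ltjs).
rewrite (big_pred1 (a, b)) // => -[x y] /=.
by apply/eqP/eqP => [[-> ->]|[-> ->]].
Qed.

Lemma spec_sum1 (A B : finType) (f : A -> option B) (a : A) b (F : A -> nat) :
  is_spec f -> f a = Some b -> \sum_(a' | f a' == Some b) F a' = F a.
Proof.
move=> specf fa; rewrite (big_pred1 a) // => a'.
by apply/eqP/eqP => [fa'|->] //; exact: specf fa' fa.
Qed.

Lemma kcomp_spec (S A B : finType) (f : S -> option (A * B)) :
  is_spec f -> is_spec (kcomp f).
Proof.
move=> specf a a' b; rewrite /kcomp.
case fa: (f a) => [[x y]|] //; case fa': (f a') => [[x' y']|] // <- [] *.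
by subst; exact: specf fa fa'.
Qed.

(* It relates M1 M2 to H K when M1 ~ A, M2 ~ B and the
   entries of AB match those of HK after this rearrangement of letters. *)
Definition spec_pair (S1 S2 A1 A2 B1 B2 : finType) (g1 : S1 -> option (A1 * A2))
  (g2 : S2 -> option (B1 * B2)) (p : S1 * S2) : option ((A1 * B1) * (A2 * B2)) :=
  match g1 p.1, g2 p.2 with
  | Some e1, Some e2 => Some ((e1.1, e2.1), (e1.2, e2.2))
  | _, _ => None
  end.

Lemma spec_pair_spec (S1 S2 A1 A2 B1 B2 : finType) (g1 : S1 -> option (A1 * A2))
  (g2 : S2 -> option (B1 * B2)) :
  is_spec g1 -> is_spec g2 -> is_spec (spec_pair g1 g2).
Proof.
move=> spec1 spec2 [a b] [a' b'] w; rewrite /spec_pair /=.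
case g1a: (g1 a) => [[x1 x2]|] //; case g2b: (g2 b) => [[y1 y2]|] //.
case g1a': (g1 a') => [[x1' y1']|] //; case g2b': (g2 b') => [[x2' y2']|] // <- [] *.
subst; congr pair; [exact: spec1 g1a g1a' | exact: spec2 g2b g2b'].
Qed.

Lemma sim_spec_pair (S1 S2 A1 A2 B1 B2 : finType) (g1 : S1 -> option (A1 * A2))
  (g2 : S2 -> option (B1 * B2)) (r n s r1 n1 n2 s2 nH : nat)
  (M1 : mat S1) (M2 : mat S2) (A : mat (A1 * A2)%type) (B : mat (B1 * B2)%type)
  (H : mat (A1 * B1)%type) (K : mat (A2 * B2)%type) :
  sim g1 r n M1 r1 n1 A -> sim g2 n s M2 n2 s2 B ->
  (forall i j e1 e2, i < r -> j < s ->
     mmul n A B i j (e1, e2) = mmul nH H K i j ((e1.1, e2.1), (e1.2, e2.2))) ->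
  sim (spec_pair g1 g2) r s (mmul n M1 M2) r s (mmul nH H K).
Proof.
move=> sim1 sim2 eqAB; split; first done; split; first done.
move=> i j ltir ltjs; split.
  move=> [a b]; rewrite /spec_pair /=.
  case g1a: (g1 a) => [e1|]; last first.
    by rewrite /mmul big1 // => k _; rewrite (sim_out_dom sim1 ltir (ltn_ord k) g1a).
  case g2b: (g2 b) => [e2|] //.
  by rewrite /mmul big1 // => k _; rewrite (sim_out_dom sim2 (ltn_ord k) ltjs g2b) muln0.
move=> [[x1 y1] [x2 y2]].
have /= <- := eqAB i j (x1, x2) (y1, y2) ltir ltjs.
transitivity (\sum_(k < n) \sum_(a | g1 a == Some (x1, x2))
   \sum_(b | g2 b == Some (y1, y2)) M1 i k a * M2 k j b).
  apply: eq_bigr => k _; rewrite (sim_entry _ sim1 ltir (ltn_ord k)).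
  rewrite (sim_entry _ sim2 (ltn_ord k) ltjs) big_distrl /=.
  by apply: eq_bigr => a _; rewrite big_distrr.
rewrite exchange_big /=.
under eq_bigr do rewrite exchange_big /=.
rewrite pair_big_dep /=; apply: eq_bigl => -[a b] /=.
rewrite /spec_pair /=; case: (g1 a) => [[u1 u2]|]; case: (g2 b) => [[v1 v2]|] //=.
  by rewrite !(inj_eq (@Some_inj _)) !xpair_eqE andbACA.
by rewrite andbF.
Qed.

(* Let g1 specify M over E, g2
   specify N over O, and let out : E.U -> W.O be a bijection of two-letter
   words.  The specification (s u) |-> (w t) when out (g1 s, u) = (w, g2 t)
   relates M Hm to Hp N as soon as M ~ A, N ~ B and the entries of A Hm match
   those of Hp B after relabelling by out. *)
Definition spec_reroute (S1 S2 E O U W : finType) (g1 : S1 -> option E)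
  (g2 : S2 -> option O) (out : E * U -> W * O) (p : S1 * U) : option (W * S2) :=
  match g1 p.1 with
  | Some e =>
      match [pick t | g2 t == Some (out (e, p.2)).2] with
      | Some t => Some ((out (e, p.2)).1, t)
      | None => None
      end
  | None => None
  end.

Section Reroute.
Variables (S1 S2 E O U W : finType) (g1 : S1 -> option E) (g2 : S2 -> option O).
Variables (out : E * U -> W * O) (inv : W * O -> E * U).
Hypotheses (outK : cancel out inv) (invK : cancel inv out).
Hypotheses (spec1 : is_spec g1) (spec2 : is_spec g2).

(* Injectivity of out makes the rerouted map a specification. *)
Lemma spec_reroute_spec : is_spec (spec_reroute g1 g2 out).
Proof.
move=> [a u] [a' u'] [w t]; rewrite /spec_reroute /=.
case g1a: (g1 a) => [e|] //; case: pickP => [t1 /eqP g2t1|] //.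
case g1a': (g1 a') => [e'|] //; case: pickP => [t2 /eqP g2t2|] // [w1 <-] [w2 t2t].
have /(can_inj outK) [ee' <-] : out (e, u) = out (e', u').
  rewrite [out (e, u)]surjective_pairing [out (e', u')]surjective_pairing.
  by rewrite w1 w2; congr pair; apply: Some_inj; rewrite -g2t1 -g2t2 t2t.
by rewrite ee' in g1a; rewrite (spec1 g1a g1a').
Qed.

Lemma spec_reroute_fibre w t o a u : g2 t = Some o ->
  (spec_reroute g1 g2 out (a, u) == Some (w, t)) =
  (g1 a == Some (inv (w, o)).1) && (u == (inv (w, o)).2).
Proof.
move=> g2t; rewrite /spec_reroute /=; apply/eqP/andP.
  case g1a: (g1 a) => [e|] //; case: pickP => [t1 /eqP g2t1|] // [w1 t1t].
  move: g2t1; rewrite t1t g2t => -[o2].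
  suff -> : inv (w, o) = (e, u) by [].
  by rewrite -(outK (e, u)) [out (e, u)]surjective_pairing w1 o2.
move=> [/eqP -> /eqP ->]; rewrite -surjective_pairing invK /=.
case: pickP => [t1 /eqP g2t1|/(_ t)]; last by rewrite g2t eqxx.
by rewrite (spec2 g2t1 g2t).
Qed.

Lemma spec_reroute_none w t a u :
  g2 t = None -> spec_reroute g1 g2 out (a, u) <> Some (w, t).
Proof.
move=> g2t; rewrite /spec_reroute /=; case: (g1 a) => [e|] //.
by case: pickP => [t1 /eqP g2t1 [_ t1t]|//]; move: g2t1; rewrite t1t g2t.
Qed.

(* Transfer of [sim]: the entries of Hp N at (w t) are those of Hp B at
   out (inv (w, g2 t)), i.e. of A Hm at inv (w, g2 t), which collect the
   entries of M Hm over the fibre of (w t). *)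
Lemma sim_spec_reroute (r n1 s n2 r1 n1' n2' s' : nat) (M : mat S1) (A : mat E)
  (Hm : mat U) (Hp : mat W) (N : mat S2) (B : mat O) :
  sim g1 r n1 M r1 n1' A -> sim g2 n2 s N n2' s' B ->
  (forall i j e u, i < r -> j < s ->
     mmul n1 A Hm i j (e, u) = mmul n2 Hp B i j (out (e, u))) ->
  sim (spec_reroute g1 g2 out) r s (mmul n1 M Hm) r s (mmul n2 Hp N).
Proof.
move=> simM simN eqAH; split; first done; split; first done.
move=> i j ltir ltjs; split.
  move=> [a u] /= MH_gt0; rewrite /spec_reroute /=.
  case g1a: (g1 a) => [e|]; last first.
    move: MH_gt0; rewrite /mmul big1 // => k _.
    by rewrite (sim_out_dom simM ltir (ltn_ord k) g1a).
  case: pickP => [t _ //|no_t].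
  have le_MA : mmul n1 M Hm i j (a, u) <= mmul n1 A Hm i j (e, u).
    apply: leq_sum => k _; apply: leq_mul => //.
    rewrite (sim_entry _ simM ltir (ltn_ord k)) (bigD1 a) /= ?g1a //.
    exact: leq_addr.
  have HB0 : mmul n2 Hp B i j (out (e, u)) = 0.
    apply: big1 => k _.
    by rewrite (sim_entry _ simN (ltn_ord k) ltjs) big_pred0 ?muln0.
  by have := leq_trans MH_gt0 le_MA; rewrite eqAH // HB0.
move=> [w t]; case g2t: (g2 t) => [o|]; last first.
  rewrite big_pred0; last by move=> [a u]; apply/eqP; exact: spec_reroute_none.
  by rewrite /mmul big1 // => k _; rewrite (sim_out_dom simN (ltn_ord k) ltjs g2t) muln0.
have -> : mmul n2 Hp N i j (w, t) = mmul n2 Hp B i j (out (inv (w, o))).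
  rewrite invK; apply: eq_bigr => k _.
  by rewrite (sim_entry _ simN (ltn_ord k) ltjs) /= (spec_sum1 _ spec2 g2t).
rewrite [inv (w, o)]surjective_pairing -eqAH //.
transitivity (\sum_(a | g1 a == Some (inv (w, o)).1) \sum_(u | u == (inv (w, o)).2)
                mmul n1 M Hm i j (a, u)); last first.
  by rewrite pair_big_dep; apply: eq_bigl => -[a u] /=; rewrite (spec_reroute_fibre _ _ _ g2t).
under [RHS]eq_bigr do rewrite big_pred1_eq.
rewrite /mmul exchange_big /=; apply: eq_bigr => k _.
by rewrite (sim_entry _ simM ltir (ltn_ord k)) big_distrl.
Qed.

End Reroute.

Definition word_cabd (T1 T2 T3 T4 : Type) (w : (T1 * T2) * (T3 * T4)) :
  (T3 * T1) * (T2 * T4) := let: ((a, b), (c, d)) := w in ((c, a), (b, d)).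
Definition word_cabd_inv (T1 T2 T3 T4 : Type) (w : (T3 * T1) * (T2 * T4)) :
  (T1 * T2) * (T3 * T4) := let: ((c, a), (b, d)) := w in ((a, b), (c, d)).
Definition word_adbc (T1 T2 T3 T4 : Type) (w : (T1 * T2) * (T3 * T4)) :
  (T1 * T4) * (T2 * T3) := let: ((a, b), (c, d)) := w in ((a, d), (b, c)).
Definition word_adbc_inv (T1 T2 T3 T4 : Type) (w : (T1 * T4) * (T2 * T3)) :
  (T1 * T2) * (T3 * T4) := let: ((a, d), (b, c)) := w in ((a, b), (c, d)).

Lemma word_cabdK T1 T2 T3 T4 : cancel (@word_cabd T1 T2 T3 T4) (@word_cabd_inv _ _ _ _).
Proof. by case=> [[? ?] [? ?]]. Qed.
Lemma word_cabd_invK T1 T2 T3 T4 : cancel (@word_cabd_inv T1 T2 T3 T4) (@word_cabd _ _ _ _).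
Proof. by case=> [[? ?] [? ?]]. Qed.
Lemma word_adbcK T1 T2 T3 T4 : cancel (@word_adbc T1 T2 T3 T4) (@word_adbc_inv _ _ _ _).
Proof. by case=> [[? ?] [? ?]]. Qed.
Lemma word_adbc_invK T1 T2 T3 T4 : cancel (@word_adbc_inv T1 T2 T3 T4) (@word_adbc _ _ _ _).
Proof. by case=> [[? ?] [? ?]]. Qed.

Section ProperToStrong.
Variables (SM SN C D : finType) (m n c d : nat -> nat).
Variables (Mm Mp : nat -> mat SM) (Nm Np : nat -> mat SN).
Variables (phi : SM -> option (C * D)) (psi : SN -> option (D * C)).
Variables (P : nat -> mat C) (Q : nat -> mat D) (X : nat -> mat D) (Y : nat -> mat C).
Hypotheses (phi_spec : is_spec phi) (psi_spec : is_spec psi).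

Hypothesis hPQ : forall l, sim phi (m l) (m l.+1) (Mp l)
  (c l.*2) (c l.*2.+2) (mmul (d l.*2.+1) (P l.*2) (Q l.*2.+1)).
Hypothesis hQP : forall l, sim psi (n l) (n l.+1) (Np l)
  (d l.*2) (d l.*2.+2) (mmul (c l.*2.+1) (Q l.*2) (P l.*2.+1)).
Hypothesis hXY : forall l, sim (kcomp phi) (m l) (m l.+1) (Mm l)
  (c l.*2) (c l.*2.+2) (mmul (c l.*2.+1) (X l.*2) (Y l.*2.+1)).
Hypothesis hYX : forall l, sim (kcomp psi) (n l) (n l.+1) (Nm l)
  (d l.*2) (d l.*2.+2) (mmul (d l.*2.+1) (Y l.*2) (X l.*2.+1)).
Hypothesis hYP : forall l, sim (@kappa C C)
  (c l.*2.+1) (d l.*2.+3) (mmul (c l.*2.+2) (Y l.*2.+1) (P l.*2.+2))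
  (c l.*2.+1) (d l.*2.+3) (mmul (d l.*2.+2) (P l.*2.+1) (Y l.*2.+2)).
Hypothesis hXQ : forall l, sim (@kappa D D)
  (d l.*2.+1) (c l.*2.+3) (mmul (d l.*2.+2) (X l.*2.+1) (Q l.*2.+2))
  (d l.*2.+1) (c l.*2.+3) (mmul (c l.*2.+2) (Q l.*2.+1) (X l.*2.+2)).
Hypothesis hXP : forall l, sim (@kappa D C)
  (c l.*2) (d l.*2.+2) (mmul (c l.*2.+1) (X l.*2) (P l.*2.+1))
  (c l.*2) (d l.*2.+2) (mmul (d l.*2.+1) (P l.*2) (X l.*2.+1)).
Hypothesis hYQ : forall l, sim (@kappa C D)
  (d l.*2) (c l.*2.+2) (mmul (d l.*2.+1) (Y l.*2) (Q l.*2.+1))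
  (d l.*2) (c l.*2.+2) (mmul (c l.*2.+1) (Q l.*2) (Y l.*2.+1)).

Definition Hmat l := mmul (c l.*2.+1) (X l.*2) (P l.*2.+1).
Definition Kmat l := mmul (d l.*2.+1) (Y l.*2) (Q l.*2.+1).

Lemma m_size l : m l = c l.*2. Proof. by case: (hPQ l). Qed.
Lemma n_size l : n l = d l.*2. Proof. by case: (hQP l). Qed.

(* M^-_l M^+_{l+1} ~ (X Y)(P Q) = (X P)(Y Q) = H_l K_{l+1}, using Y P ~ P Y. *)
Lemma MmMp_sim l :
  sim (spec_pair (kcomp phi) phi) (m l) (m l.+2) (mmul (m l.+1) (Mm l) (Mp l.+1))
      (m l) (m l.+2) (mmul (n l.+1) (Hmat l) (Kmat l.+1)).
Proof.
apply: (sim_spec_pair (hXY l) (hPQ l.+1)) => i j [x y] [p q] _ _.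
rewrite /Hmat /Kmat m_size n_size !doubleS /=.
apply: mmul4_swap_mid => s t lts ltt.
by rewrite (kappa_entry (hYP l)).
Qed.

(* N^-_l N^+_{l+1} ~ (Y X)(Q P) = (Y Q)(X P) = K_l H_{l+1}, using X Q ~ Q X. *)
Lemma NmNp_sim l :
  sim (spec_pair (kcomp psi) psi) (n l) (n l.+2) (mmul (n l.+1) (Nm l) (Np l.+1))
      (n l) (n l.+2) (mmul (m l.+1) (Kmat l) (Hmat l.+1)).
Proof.
apply: (sim_spec_pair (hYX l) (hQP l.+1)) => i j [y x] [q p] _ _.
rewrite /Hmat /Kmat m_size n_size !doubleS /=.
apply: mmul4_swap_mid => s t lts ltt.
by rewrite (kappa_entry (hXQ l)).
Qed.

(* M^+_l H_{l+1} ~ (P Q)(X P) = (P X)(Q P) = (X P)(Q P) ~ H_l N^+_{l+1},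
   using Q X ~ X Q and P X ~ X P. *)
Lemma MpH_sim l :
  sim (spec_reroute phi psi (@word_cabd _ _ _ _)) (m l) (n l.+2)
      (mmul (m l.+1) (Mp l) (Hmat l.+1)) (m l) (n l.+2) (mmul (n l.+1) (Hmat l) (Np l.+1)).
Proof.
apply: (sim_spec_reroute (@word_cabdK _ _ _ _) (@word_cabd_invK _ _ _ _) psi_spec
  (hPQ l) (hQP l.+1)) => i j [p0 q0] [x p] lti _.
rewrite m_size in lti; rewrite /Hmat m_size n_size !doubleS /=.
apply: etrans; [apply: mmul4_swap_mid | apply: mmul4_swap_left].
  by move=> s t lts ltt; rewrite (kappa_entry (hXQ l)).
by move=> k ltk; rewrite (kappa_entry (hXP l)).
Qed.
(* N^+_l K_{l+1} ~ (Q P)(Y Q) = (Q Y)(P Q) = (Y Q)(P Q) ~ K_l M^+_{l+1},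
   using P Y ~ Y P and Q Y ~ Y Q. *)
Lemma NpK_sim l :
  sim (spec_reroute psi phi (@word_cabd _ _ _ _)) (n l) (m l.+2)
      (mmul (n l.+1) (Np l) (Kmat l.+1)) (n l) (m l.+2) (mmul (m l.+1) (Kmat l) (Mp l.+1)).
Proof.
apply: (sim_spec_reroute (@word_cabdK _ _ _ _) (@word_cabd_invK _ _ _ _) phi_spec
  (hQP l) (hPQ l.+1)) => i j [q0 p0] [y q] lti _.
rewrite n_size in lti; rewrite /Kmat m_size n_size !doubleS /=.
apply: etrans; [apply: mmul4_swap_mid | apply: mmul4_swap_left].
  by move=> s t lts ltt; rewrite (kappa_entry (hYP l)).
by move=> k ltk; rewrite (kappa_entry (hYQ l)).
Qed.

(* M^-_l H_{l+1} ~ (X Y)(X P) = (X Y)(P X) = (X P)(Y X) ~ H_l N^-_{l+1},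
   using X P ~ P X (one level up) and Y P ~ P Y. *)
Lemma MmH_sim l :
  sim (spec_reroute (kcomp phi) (kcomp psi) (@word_adbc _ _ _ _)) (m l) (n l.+2)
      (mmul (m l.+1) (Mm l) (Hmat l.+1)) (m l) (n l.+2) (mmul (n l.+1) (Hmat l) (Nm l.+1)).
Proof.
apply: (sim_spec_reroute (@word_adbcK _ _ _ _) (@word_adbc_invK _ _ _ _)
  (kcomp_spec psi_spec) (hXY l) (hYX l.+1)) => i j [x0 y0] [x p] _ ltj.
rewrite n_size !doubleS in ltj; rewrite /Hmat m_size n_size !doubleS /=.
apply: etrans; [apply: mmul4_swap_right | apply: mmul4_swap_mid].
  by move=> k ltk; have := kappa_entry (hXP l.+1); rewrite doubleS => <-.
by move=> s t lts ltt; rewrite (kappa_entry (hYP l)).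
Qed.

(* N^-_l K_{l+1} ~ (Y X)(Y Q) = (Y X)(Q Y) = (Y Q)(X Y) ~ K_l M^-_{l+1},
   using Y Q ~ Q Y (one level up) and X Q ~ Q X. *)
Lemma NmK_sim l :
  sim (spec_reroute (kcomp psi) (kcomp phi) (@word_adbc _ _ _ _)) (n l) (m l.+2)
      (mmul (n l.+1) (Nm l) (Kmat l.+1)) (n l) (m l.+2) (mmul (m l.+1) (Kmat l) (Mm l.+1)).
Proof.
apply: (sim_spec_reroute (@word_adbcK _ _ _ _) (@word_adbc_invK _ _ _ _)
  (kcomp_spec phi_spec) (hYX l) (hXY l.+1)) => i j [y0 x0] [y q] _ ltj.
rewrite m_size !doubleS in ltj; rewrite /Kmat m_size n_size !doubleS /=.
apply: etrans; [apply: mmul4_swap_right | apply: mmul4_swap_mid].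
  by move=> k ltk; have := kappa_entry (hYQ l.+1); rewrite doubleS => <-.
by move=> s t lts ltt; rewrite (kappa_entry (hXQ l)).
Qed.

End ProperToStrong.

Theorem proposition6p18 (SM SN : finType)
  (m : nat -> nat) (Mm Mp : nat -> mat SM)
  (n : nat -> nat) (Nm Np : nat -> mat SN) :
  is_bisystem m Mm Mp -> is_bisystem n Nm Np ->
  FPCC m Mm Mp -> FPCC n Nm Np ->
  pSSE1 m Mm Mp n Nm Np ->
  SSE1 m Mm Mp n Nm Np.
Proof.
move=> _ _ _ _ [C [D [phi [psi [c [d [P [Q [X [Y [phi_spec [psi_spec rel]]]]]]]]]]]].
have hPQ l := (rel l).1; have hQP l := (rel l).2.1.
have hXY l := (rel l).2.2.1; have hYX l := (rel l).2.2.2.1.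
have hYP l := (rel l).2.2.2.2.1; have hXQ l := (rel l).2.2.2.2.2.1.
have hXP l := (rel l).2.2.2.2.2.2.1; have hYQ l := (rel l).2.2.2.2.2.2.2.
have phi'_spec := kcomp_spec phi_spec; have psi'_spec := kcomp_spec psi_spec.
exists (D * C)%type, (C * D)%type,
  (spec_pair (kcomp phi) phi), (spec_pair (kcomp psi) psi),
  (spec_reroute phi psi (@word_cabd _ _ _ _)),
  (spec_reroute (kcomp phi) (kcomp psi) (@word_adbc _ _ _ _)),
  (spec_reroute psi phi (@word_cabd _ _ _ _)),
  (spec_reroute (kcomp psi) (kcomp phi) (@word_adbc _ _ _ _)),
  (Hmat c P X), (Kmat d Q Y).
do 2 (split; first exact: spec_pair_spec).
have cabd_spec := spec_reroute_spec (@word_cabdK _ _ _ _).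
have adbc_spec := spec_reroute_spec (@word_adbcK _ _ _ _).
do 4 (split; first by [apply: cabd_spec | apply: adbc_spec]).
move=> l; split; first by apply: MmMp_sim.
split; first by apply: NmNp_sim.
split; first by apply: MpH_sim.
split; first by apply: NpK_sim.
split; first by apply: MmH_sim.
by apply: NmK_sim.
Qed.
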